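(* Let $k$ be an odd integer with $k\ge 5$, let $D$ be a strong $k$-quasi-transitive digraph with $\mathrm{diam}(D)\ge k+2$, let $u,v\in V(D)$ with $d(u,v)=k+2$, and let $P$ be a shortest $(u,v)$-path in $D$. Then $D[V(P)]$ is either a semicomplete digraph or a semicomplete bipartite digraph.
   Context: All digraphs are finite, without loops or multiple arcs (opposite arcs allowed). Vertices $x,y$ are adjacent if $xy$ or $yx$ is an arc. For $k\ge 2$, $D$ is $k$-quasi-transitive if for every path $x_0x_1\ldots x_k$ of length $k$, $x_0$ and $x_k$ are adjacent. $d(x,y)$ is the length of a shortest $(x,y)$-path, $\mathrm{diam}(D)=\max_{x,y}d(x,y)$. $D[S]$ is the induced subdigraph. A semicomplete digraph: every two distinct vertices adjacent. A semicomplete bipartite digraph: there is a bipartition $(X,Y)$ of the vertex set with no arcs inside $X$ or $Y$ and every vertex of $X$ adjacent to every vertex of $Y$. *)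

(* Loops are excluded
   by the hypothesis [irreflexive arc]; multiple arcs cannot occur for a
   relation; opposite arcs are allowed. *)
From mathcomp Require Import all_boot.
Set Implicit Arguments. Unset Strict Implicit. Unset Printing Implicit Defensive.

Section Digraphs.
Variable V : finType.
Variable arc : rel V.

Definition adjacent (x y : V) : bool := arc x y || arc y x.

Definition dipath (x : V) (p : seq V) (y : V) (n : nat) : bool :=
  [&& path arc x p, uniq (x :: p), last x p == y & size p == n].

Definition quasi_transitive (k : nat) : Prop :=
  forall (x : V) (p : seq V) (y : V), dipath x p y k -> adjacent x y.

Definition dist_is (x y : V) (n : nat) : Prop :=
  (exists p, dipath x p y n) /\
  (forall (p : seq V) (m : nat), dipath x p y m -> n <= m).

Definition strong : Prop :=
  forall x y : V, exists (p : seq V) (n : nat), dipath x p y n.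

Definition diam_ge (m : nat) : Prop :=
  exists (x y : V) (n : nat), dist_is x y n /\ m <= n.

Definition semicomplete_on (S : seq V) : Prop :=
  forall x y, x \in S -> y \in S -> x != y -> adjacent x y.

(* D[S] is semicomplete bipartite: there is a bipartition (X,Y) of S
   (X = members of S with side true, Y = those with side false) with no arc
   inside X or inside Y and every vertex of X adjacent to every vertex of Y. *)
Definition semicomplete_bipartite_on (S : seq V) : Prop :=
  exists side : V -> bool,
    forall x y, x \in S -> y \in S ->
      (side x == side y -> ~~ arc x y) /\
      (side x != side y -> adjacent x y).

End Digraphs.

(* Write P = x_0 ... x_{k+2}.  As P is a shortest path there is no arc x_i x_j with
   j >= i + 2, so two vertices of P that are not consecutive on P are adjacent exactly
   when there is a backward arc x_j x_i.  A walk that follows P forward along disjoint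
   segments and jumps back along known backward arcs, and misses exactly two vertices of
   P, is a path of length k; by k-quasi-transitivity its ends are adjacent, which yields
   a new backward arc.  Starting from the arcs x_{i+k} x_i (i <= 2) this produces every
   backward arc x_j x_i with j - i odd and at least 3.  A backward arc with j - i even
   forces the chord x_{k+1} x_0, and the chord forces every backward arc.  So D[V(P)] is
   semicomplete if the chord is present, and bipartite by the parity of the index
   otherwise.  Reversing both D and P sends index i to k + 2 - i and halves the case
   analysis. *)

From mathcomp Require Import all_boot zify.
Set Implicit Arguments. Unset Strict Implicit. Unset Printing Implicit Defensive.

Lemma last_iota a l : last a (iota a.+1 l) = a + l.
Proof. by elim: l a => [|l IH] a /=; rewrite ?addn0 ?IH ?addnS. Qed.

Lemma step2_ind (Q : nat -> Prop) y n :
  (forall z, y <= z -> z.+2 <= n -> Q z -> Q z.+2) ->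
  y <= n -> ~~ odd (n - y) -> Q y -> Q n.
Proof.
move=> step y_le n_y_even Qy.
suff climb d : y + d.*2 <= n -> Q (y + d.*2).
  have -> : n = y + ((n - y)./2).*2 by lia.
  by apply: climb; lia.
elim: d => [|d IH] le_n; first by rewrite addn0.
by rewrite doubleS !addnS; apply: step; [lia | lia | apply: IH; lia].
Qed.

Section Digraph.
Variables (V : finType) (arc : rel V).

Definition converse : rel V := fun y z => arc z y.

Lemma dipath_converse x p y n :
  dipath arc x p y n -> dipath converse y (rev (belast x p)) x n.
Proof.
case/and4P=> p_path p_uniq /eqP <- /eqP <-.
have rev_xp : last x p :: rev (belast x p) = rcons (rev p) x.
  by rewrite -rev_rcons -lastI rev_cons.
apply/and4P; split.
- by rewrite rev_path.
- by rewrite -rev_rcons -lastI rev_uniq.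
- by rewrite -(last_cons x) rev_xp last_rcons.
- by rewrite size_rev size_belast.
Qed.

Lemma adjacentC : symmetric (adjacent arc).
Proof. by move=> y z; rewrite /adjacent orbC. Qed.

Lemma semicomplete_on_nth (x0 : V) (s : seq V) :
  (forall a b, a < size s -> b < size s -> a != b ->
     adjacent arc (nth x0 s a) (nth x0 s b)) ->
  semicomplete_on arc s.
Proof.
move=> adj y z y_in z_in yz.
rewrite -(nth_index x0 y_in) -(nth_index x0 z_in) adj ?index_mem //.
by apply: contra yz => /eqP yz_idx; rewrite -(nth_index x0 y_in) yz_idx nth_index.
Qed.

Lemma semicomplete_bipartite_on_nth (x0 : V) (s : seq V) (side : nat -> bool) :
  (forall a b, a < size s -> b < size s ->
     (side a == side b -> ~~ arc (nth x0 s a) (nth x0 s b)) /\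
     (side a != side b -> adjacent arc (nth x0 s a) (nth x0 s b))) ->
  semicomplete_bipartite_on arc s.
Proof.
move=> parts; exists (fun y => side (index y s)) => y z y_in z_in.
by have := parts (index y s) (index z s); rewrite !nth_index ?index_mem //; apply.
Qed.

End Digraph.

Lemma quasi_transitive_converse (V : finType) (arc : rel V) k :
  quasi_transitive arc k -> quasi_transitive (converse arc) k.
Proof. by move=> qt y p z /(@dipath_converse _ (converse arc)) /qt. Qed.

Definition segment (r : nat * nat) : seq nat := index_iota r.1 r.2.+1.

Definition run (rs : seq (nat * nat)) : seq nat := flatten (map segment rs).

Definition disjoint_segments (r s : nat * nat) : bool := (r.2 < s.1) || (s.2 < r.1).

Lemma segment_cons r : r.1 <= r.2 -> segment r = r.1 :: iota r.1.+1 (r.2 - r.1).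
Proof. by move=> r12; rewrite /segment /index_iota subSn. Qed.

Lemma mem_run z rs : (z \in run rs) = has (fun r => r.1 <= z <= r.2) rs.
Proof. by elim: rs => //= r rs IH; rewrite mem_cat mem_index_iota ltnS IH. Qed.

Lemma size_run rs : size (run rs) = sumn [seq r.2.+1 - r.1 | r <- rs].
Proof. by elim: rs => //= r rs IH; rewrite size_cat size_iota IH. Qed.

Lemma uniq_run rs : pairwise disjoint_segments rs -> uniq (run rs).
Proof.
elim: rs => //= r rs IH /andP [r_sep rs_sep].
rewrite cat_uniq iota_uniq IH // andbT.
apply/hasPn => z; rewrite mem_run => /hasP [s s_in z_s].
rewrite mem_index_iota ltnS.
by move: (allP r_sep s s_in) z_s; rewrite /disjoint_segments; lia.
Qed.

(* The run [:: (a_1, b_1); ...; (a_m, b_m)] stands for the walk that goes forward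
   along x from x_{a_l} to x_{b_l}, then jumps to x_{a_(l+1)} ([linked]). *)
Section Runs.
Variables (V : finType) (arc : rel V) (x : nat -> V) (n : nat).
Hypothesis x_step : forall i, i < n -> arc (x i) (x i.+1).
Hypothesis x_inj : {in [pred i | i <= n] &, injective x}.

Definition linked (r s : nat * nat) : bool := arc (x r.2) (x s.1).

Lemma path_segment a l : a + l <= n -> path (relpre x arc) a (iota a.+1 l).
Proof. by elim: l a => //= l IH a al; rewrite x_step ?IH; lia. Qed.

Lemma path_run r rs :
  all (fun s => s.1 <= s.2 <= n) (r :: rs) -> path linked r rs ->
  path (relpre x arc) r.1 (behead (run (r :: rs))) /\
  last r.1 (behead (run (r :: rs))) = (last r rs).2.
Proof.
elim: rs r => [|s rs IH] r /= /andP [/andP [r12 r2n] rs_ok].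
  by rewrite /run /= cats0 segment_cons //= last_iota subnKC // path_segment ?subnKC.
case/andP=> rs_link /(IH s rs_ok) [].
have s12 : s.1 <= s.2 by case/andP: rs_ok => /andP [] ->.
rewrite /run /= (segment_cons r12) (segment_cons s12) /= => s_path s_last.
rewrite cat_path last_cat /= last_iota subnKC // path_segment ?subnKC //.
by rewrite s_path s_last andbT; split.
Qed.

Lemma dipath_run r rs :
  all (fun s => s.1 <= s.2 <= n) (r :: rs) -> pairwise disjoint_segments (r :: rs) ->
  path linked r rs ->
  dipath arc (x r.1) (map x (behead (run (r :: rs)))) (x (last r rs).2)
    (size (run (r :: rs))).-1.
Proof.
move=> rs_ok rs_sep /(path_run rs_ok) [rs_path rs_last].
have r12 : r.1 <= r.2 by case/andP: rs_ok => /andP [].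
have run_head : r.1 :: behead (run (r :: rs)) = run (r :: rs).
  by rewrite /run /= segment_cons.
apply/and4P; split.
- by rewrite path_map.
- rewrite -map_cons run_head map_inj_in_uniq ?uniq_run // => i j.
  rewrite !mem_run => /hasP [s s_in i_s] /hasP [s' s'_in j_s'].
  by apply: x_inj; rewrite inE;
     [move: (allP rs_ok s s_in) | move: (allP rs_ok s' s'_in)]; lia.
- by rewrite last_map rs_last.
- by rewrite size_map size_behead.
Qed.

Lemma adjacent_run k r rs :
  quasi_transitive arc k ->
  all (fun s => s.1 <= s.2 <= n) (r :: rs) -> pairwise disjoint_segments (r :: rs) ->
  size (run (r :: rs)) = k.+1 -> path linked r rs ->
  adjacent arc (x r.1) (x (last r rs).2).
Proof.
move=> qt rs_ok rs_sep rs_size /(dipath_run rs_ok rs_sep).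
by rewrite rs_size; apply: qt.
Qed.

Hypothesis x_min : forall p m, dipath arc (x 0) p (x n) m -> n <= m.

Lemma no_forward_chord a b : a.+1 < b <= n -> ~~ arc (x a) (x b).
Proof.
move=> ab; apply/negP => x_ab.
pose rs := [:: (0, a); (b, n)].
have /x_min : dipath arc (x 0) (map x (behead (run rs))) (x n) (size (run rs)).-1.
  by apply: dipath_run; rewrite /= /disjoint_segments /linked ?x_ab ?andbT //=; lia.
by rewrite size_run /=; lia.
Qed.

Lemma arc_back_of_adjacent a b :
  a.+1 < b <= n -> adjacent arc (x a) (x b) -> arc (x b) (x a).
Proof. by move=> ab; rewrite /adjacent (negbTE (no_forward_chord ab)). Qed.

End Runs.

Record geodesic (V : finType) (arc : rel V) (x : nat -> V) (n : nat) : Prop := Geodesic {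
  geodesic_step : forall i, i < n -> arc (x i) (x i.+1);
  geodesic_inj : {in [pred i | i <= n] &, injective x};
  geodesic_min : forall p m, dipath arc (x 0) p (x n) m -> n <= m }.

Lemma geodesic_nth (V : finType) (arc : rel V) u P v n :
  dipath arc u P v n -> (forall p m, dipath arc u p v m -> n <= m) ->
  geodesic arc (nth u (u :: P)) n.
Proof.
case/and4P=> P_path P_uniq /eqP P_last /eqP P_size P_min; split.
- by move=> i; rewrite -P_size; apply: (pathP u P_path).
- move=> i j; rewrite !inE => i_le j_le /eqP.
  by rewrite nth_uniq /= ?P_size ?ltnS // => /eqP.
- by move=> p m; rewrite /= -{1}P_size nth_last /= P_last; apply: P_min.
Qed.

Lemma geodesic_converse (V : finType) (arc : rel V) x n :
  geodesic arc x n -> geodesic (converse arc) (fun i => x (n - i)) n.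
Proof.
case=> x_step x_inj x_min; split.
- by move=> i lt_in; rewrite /converse -(subnSK lt_in) x_step //; lia.
- move=> i j; rewrite !inE => i_le j_le /x_inj.
  by rewrite !inE !leq_subr => /(_ isT isT); lia.
- by move=> p m /(@dipath_converse _ (converse arc)); rewrite subn0 subnn; apply: x_min.
Qed.

Record qt_geodesic (V : finType) (arc : rel V) (x : nat -> V) (k : nat) : Prop :=
  QtGeodesic {
    qt_geodesic_geodesic : geodesic arc x k.+2;
    qt_geodesic_qt : quasi_transitive arc k;
    qt_geodesic_odd : odd k;
    qt_geodesic_ge5 : 5 <= k }.

Lemma qt_geodesic_converse (V : finType) (arc : rel V) x k :
  qt_geodesic arc x k -> qt_geodesic (converse arc) (fun i => x (k.+2 - i)) k.
Proof.
case=> G qt k_odd k_ge5; split => //.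
  exact: geodesic_converse.
exact: quasi_transitive_converse.
Qed.

Section QtGeodesic.
Variable V : finType.
Implicit Types (arc : rel V) (x : nat -> V) (k : nat).

Lemma arc_back_of_run arc x k (S : qt_geodesic arc x k) r rs :
  all (fun s => s.1 <= s.2 <= k.+2) (r :: rs) -> pairwise disjoint_segments (r :: rs) ->
  size (run (r :: rs)) = k.+1 -> path (linked arc x) r rs -> (last r rs).2.+1 < r.1 ->
  arc (x r.1) (x (last r rs).2).
Proof.
case: S => [[x_step x_inj x_min] qt _ _] rs_ok rs_sep rs_size rs_path back.
apply: (arc_back_of_adjacent x_step x_inj x_min).
  by case/andP: rs_ok => /andP [r12 r2n] _; rewrite back /= (leq_trans r12 r2n).
by rewrite adjacentC; apply: (adjacent_run x_step x_inj qt).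
Qed.

Ltac by_run S r rs :=
  apply: (arc_back_of_run S (r := r) (rs := rs));
  [ rewrite /= ?andbT; lia
  | rewrite /= /disjoint_segments /= ?andbT; lia
  | rewrite size_run /=; lia
  | rewrite /linked /= ?andbT; repeat (apply/andP; split)
  | rewrite /=; lia ].

Lemma arc_back_span arc x k (S : qt_geodesic arc x k) i :
  i <= 2 -> arc (x (i + k)) (x i).
Proof.
case: S => [[x_step x_inj x_min] qt _ k_ge5] le_i2.
apply: (arc_back_of_adjacent x_step x_inj x_min); first lia.
apply: (adjacent_run x_step x_inj (r := (i, i + k)) (rs := [::]) qt) => //=.
  lia.
by rewrite size_run /=; lia.
Qed.

Lemma arc_last_first arc x k (S : qt_geodesic arc x k) : arc (x k.+2) (x 0).
Proof.
have [_ _ _ k_ge5] := S.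
by_run S (k.+2, k.+2) [:: (2, k); (0, 0)].
  exact: (arc_back_span S (i := 2)).
exact: (arc_back_span S (i := 0)).
Qed.

Lemma arc_odd_first arc x k (S : qt_geodesic arc x k) m :
  odd m -> 3 <= m <= k.+2 -> arc (x m) (x 0).
Proof.
have [_ _ k_odd k_ge5] := S.
elim/ltn_ind: m => m IH m_odd m_bounds.
have [-> | m_ne3] := eqVneq m 3.
  by by_run S (3, k.+2) [:: (0, 0)]; exact: (arc_last_first S).
have [-> | m_nek2] := eqVneq m k.+2; first exact: (arc_last_first S).
by_run S (m, k.+1) [:: (1, m - 2); (0, 0)].
  exact: (arc_back_span S (i := 1)).
apply: IH; lia.
Qed.

Lemma arc_even_second arc x k (S : qt_geodesic arc x k) m :
  ~~ odd m -> 4 <= m <= k.+2 -> arc (x m) (x 1).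
Proof.
have [_ _ k_odd k_ge5] := S.
elim/ltn_ind: m => m IH m_even m_bounds.
have [-> | m_ne4] := eqVneq m 4.
  by by_run S (4, k.+2) [:: (0, 1)]; exact: (arc_last_first S).
by_run S (m, k.+2) [:: (2, m - 2); (1, 1)].
  exact: (arc_back_span S (i := 2)).
apply: IH; lia.
Qed.

Lemma arc_last_even arc x k (S : qt_geodesic arc x k) t :
  ~~ odd t -> t + 3 <= k.+2 -> arc (x k.+2) (x t).
Proof.
have [_ _ k_odd _] := S => t_even t_le.
have := arc_odd_first (qt_geodesic_converse S) (m := k.+2 - t).
by rewrite /converse subn0 subKn; [apply; lia | lia].
Qed.

Lemma arc_penultimate_odd arc x k (S : qt_geodesic arc x k) t :
  odd t -> t + 4 <= k.+2 -> arc (x k.+1) (x t).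
Proof.
have [_ _ k_odd _] := S => t_odd t_le.
have := arc_even_second (qt_geodesic_converse S) (m := k.+2 - t).
by rewrite /converse subn1 subKn; [apply; lia | lia].
Qed.

Lemma arc_back_odd arc x k (S : qt_geodesic arc x k) i j :
  odd (j - i) -> i + 3 <= j <= k.+2 -> arc (x j) (x i).
Proof.
have [_ _ k_odd k_ge5] := S => ij_odd ij.
have [i0 | i_ne0] := eqVneq i 0; first by rewrite i0; apply: (arc_odd_first S); lia.
have [i1 | i_ne1] := eqVneq i 1; first by rewrite i1; apply: (arc_even_second S); lia.
have [jk2 | j_nek2] := eqVneq j k.+2; first by rewrite jk2; apply: (arc_last_even S); lia.
have [jk1 | j_nek1] := eqVneq j k.+1.
  by rewrite jk1; apply: (arc_penultimate_odd S); lia.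
have from_even i' j' : odd (j' - i') -> ~~ odd i' -> 2 <= i' -> i' + 3 <= j' <= k ->
    arc (x j') (x i').
  move=> ij_odd' i_even' i_ge2' ij'.
  by_run S (j', k.+1) [:: (i'.+1, j'.-1); (1, i')].
    by apply: (arc_penultimate_odd S); lia.
  by apply: (arc_even_second S); lia.
have [i_odd | i_even] := boolP (odd i); last by apply: from_even; lia.
by_run S (j, k.+2) [:: (i.+1, j.-1); (2, i)].
  by apply: (arc_last_even S); lia.
by apply: from_even; lia.
Qed.

Lemma chord_shift arc x k (S : qt_geodesic arc x k) :
  arc (x k.+1) (x 0) -> arc (x k.+2) (x 1).
Proof.
have [_ _ k_odd k_ge5] := S => chord.
by_run S (k.+2, k.+2) [:: (4, k.+1); (0, 1)] => //.
by apply: (arc_back_odd S); lia.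
Qed.

Lemma chordE arc x k (S : qt_geodesic arc x k) :
  arc (x k.+1) (x 0) = arc (x k.+2) (x 1).
Proof.
apply/idP/idP; first exact: (chord_shift S).
have := chord_shift (qt_geodesic_converse S).
by rewrite /converse subn0 subn1 subSnn subnn.
Qed.

Section Chord.
Variables (arc : rel V) (x : nat -> V) (k : nat).
Hypothesis S : qt_geodesic arc x k.
Hypothesis chord : arc (x k.+1) (x 0).

Lemma arc_first_of_chord m : 2 <= m <= k.+2 -> arc (x m) (x 0).
Proof.
have [_ _ k_odd k_ge5] := S.
elim/ltn_ind: m => m IH m_bounds.
have [m_odd | m_even] := boolP (odd m); first by apply: (arc_back_odd S); lia.
have [-> | m_ne2] := eqVneq m 2; first by by_run S (2, k.+1) [:: (0, 0)].
by_run S (m, k.+1) [:: (1, m - 2); (0, 0)].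
  exact: (arc_back_span S (i := 1)).
apply: IH; lia.
Qed.

Lemma arc_second_of_chord m : 3 <= m <= k.+2 -> arc (x m) (x 1).
Proof.
have [_ _ k_odd k_ge5] := S.
elim/ltn_ind: m => m IH m_bounds.
have [m_odd | m_even] := boolP (odd m); last by apply: (arc_back_odd S); lia.
have [-> | m_ne3] := eqVneq m 3.
  by by_run S (3, k.+2) [:: (1, 1)]; rewrite -(chordE S).
by_run S (m, k.+2) [:: (2, m - 2); (1, 1)].
  exact: (arc_back_span S (i := 2)).
apply: IH; lia.
Qed.

End Chord.

Lemma arc_last_of_chord arc x k (S : qt_geodesic arc x k) t :
  arc (x k.+1) (x 0) -> t <= k -> arc (x k.+2) (x t).
Proof.
move=> chord t_le.
have := arc_first_of_chord (qt_geodesic_converse S) _ (m := k.+2 - t).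
rewrite /converse subn0 subSnn subKn; last lia.
by apply; [rewrite -(chordE S) | lia].
Qed.

Lemma arc_penultimate_of_chord arc x k (S : qt_geodesic arc x k) t :
  arc (x k.+1) (x 0) -> t < k -> arc (x k.+1) (x t).
Proof.
move=> chord t_lt.
have := arc_second_of_chord (qt_geodesic_converse S) _ (m := k.+2 - t).
rewrite /converse subn0 subn1 subSnn subKn; last lia.
by apply; [rewrite -(chordE S) | lia].
Qed.

Lemma arc_back_of_chord arc x k (S : qt_geodesic arc x k) i j :
  arc (x k.+1) (x 0) -> i.+1 < j <= k.+2 -> arc (x j) (x i).
Proof.
have [_ _ k_odd k_ge5] := S => chord ij.
have [i0 | i_ne0] := eqVneq i 0.
  by rewrite i0; apply: (arc_first_of_chord S); lia.
have [i1 | i_ne1] := eqVneq i 1.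
  by rewrite i1; apply: (arc_second_of_chord S); lia.
have [jk2 | j_nek2] := eqVneq j k.+2.
  by rewrite jk2; apply: (arc_last_of_chord S); lia.
have [jk1 | j_nek1] := eqVneq j k.+1.
  by rewrite jk1; apply: (arc_penultimate_of_chord S); lia.
by_run S (j, k.+1) [:: (i.+1, j.-1); (1, i)].
  by apply: (arc_penultimate_of_chord S); lia.
by apply: (arc_second_of_chord S); lia.
Qed.

Lemma chord_of_arc_first_even arc x k (S : qt_geodesic arc x k) y :
  ~~ odd y -> 2 <= y <= k.+1 -> arc (x y) (x 0) -> arc (x k.+1) (x 0).
Proof.
have [_ _ k_odd k_ge5] := S => y_even y_bounds.
apply: (step2_ind (Q := fun z => arc (x z) (x 0))); [|lia|lia].
move=> z y_le_z z_le z_arc.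
by_run S (z.+2, k.+1) [:: (1, z); (0, 0)] => //.
exact: (arc_back_span S (i := 1)).
Qed.

Lemma chord_of_arc_second_odd arc x k (S : qt_geodesic arc x k) y :
  odd y -> 3 <= y <= k.+2 -> arc (x y) (x 1) -> arc (x k.+1) (x 0).
Proof.
have [_ _ k_odd k_ge5] := S => y_odd y_bounds; rewrite (chordE S).
apply: (step2_ind (Q := fun z => arc (x z) (x 1))); [|lia|lia].
move=> z y_le_z z_le z_arc.
by_run S (z.+2, k.+2) [:: (2, z); (1, 1)] => //.
exact: (arc_back_span S (i := 2)).
Qed.

Lemma chord_of_arc_last_odd arc x k (S : qt_geodesic arc x k) t :
  odd t -> t <= k -> arc (x k.+2) (x t) -> arc (x k.+1) (x 0).
Proof.
have [_ _ k_odd _] := S => t_odd t_le t_arc; rewrite (chordE S).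
have := chord_of_arc_first_even (qt_geodesic_converse S) (y := k.+2 - t).
rewrite /converse subn0 subSnn subKn; last lia.
by apply => //; lia.
Qed.

Lemma chord_of_arc_penultimate_even arc x k (S : qt_geodesic arc x k) t :
  ~~ odd t -> t < k -> arc (x k.+1) (x t) -> arc (x k.+1) (x 0).
Proof.
have [_ _ k_odd _] := S => t_even t_lt t_arc; rewrite (chordE S).
have := chord_of_arc_second_odd (qt_geodesic_converse S) (y := k.+2 - t).
rewrite /converse subn0 subSnn subn1 subKn; last lia.
by apply => //; lia.
Qed.

Lemma arc_back_even_widen_right arc x k (S : qt_geodesic arc x k) i j :
  2 <= i -> i.+1 < j -> j < k -> ~~ odd (j - i) -> arc (x j) (x i) ->
  arc (x j.+3) (x i.-1).
Proof.
have [_ _ k_odd k_ge5] := S => i_ge2 ij j_lt ij_even ji.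
have [r r_odd r_bounds] : exists2 r, odd r & i <= r <= i.+1.
  by case/boolP: (odd i) => i_odd; [exists i | exists i.+1]; lia.
by_run S (j.+3, k.+2) [:: (r.+1, j); (i, r); (0, i.-1)] => //.
  by apply: (arc_back_odd S); lia.
by apply: (arc_odd_first S); lia.
Qed.

Lemma arc_back_even_widen_left arc x k (S : qt_geodesic arc x k) i j :
  3 <= i -> i.+1 < j <= k -> ~~ odd (j - i) -> arc (x j) (x i) ->
  arc (x j.+1) (x (i - 3)).
Proof.
have [_ _ k_odd _] := S => i_ge3 ij ij_even ji.
have := arc_back_even_widen_right (qt_geodesic_converse S)
  (i := k.+2 - j) (j := k.+2 - i).
rewrite /converse !subKn; try lia.
have -> : k.+2 - (k.+2 - j).-1 = j.+1 by lia.
have -> : k.+2 - (k.+2 - i).+3 = i - 3 by lia.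
by apply => //; lia.
Qed.

Lemma chord_of_arc_back_even arc x k (S : qt_geodesic arc x k) i j :
  ~~ odd (j - i) -> i.+1 < j <= k.+2 -> arc (x j) (x i) -> arc (x k.+1) (x 0).
Proof.
have [_ _ k_odd k_ge5] := S.
elim/ltn_ind: i j => i IH j ij_even ij ji.
have [i0 | i_ne0] := eqVneq i 0.
  by rewrite i0 in ji; apply: (chord_of_arc_first_even S _ _ ji); lia.
have [i1 | i_ne1] := eqVneq i 1.
  by rewrite i1 in ji; apply: (chord_of_arc_second_odd S _ _ ji); lia.
have [jk2 | j_nek2] := eqVneq j k.+2.
  by rewrite jk2 in ji; apply: (chord_of_arc_last_odd S _ _ ji); lia.
have [jk1 | j_nek1] := eqVneq j k.+1.
  by rewrite jk1 in ji; apply: (chord_of_arc_penultimate_even S _ _ ji); lia.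
have [j_lt | j_ge] := ltnP j k.
  apply: (IH i.-1 _ j.+3); [lia | lia | lia |].
  by apply: (arc_back_even_widen_right S) => //; lia.
apply: (IH (i - 3) _ j.+1); [lia | lia | lia |].
by apply: (arc_back_even_widen_left S) => //; lia.
Qed.

Lemma adjacent_of_chord arc x k (S : qt_geodesic arc x k) a b :
  arc (x k.+1) (x 0) -> a <= k.+2 -> b <= k.+2 -> a != b -> adjacent arc (x a) (x b).
Proof.
have [[x_step _ _] _ _ _] := S => chord.
wlog ab : a b / a < b => [hwlog a_le b_le | _ b_le _].
  rewrite neq_ltn => /orP [ab | ba]; first exact: hwlog (negbT (ltn_eqF ab)).
  by rewrite adjacentC; apply: hwlog (negbT (ltn_eqF ba)).
rewrite /adjacent; have [ba1 | b_ne] := eqVneq b a.+1.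
  by rewrite ba1 x_step //; lia.
by apply/orP; right; apply: (arc_back_of_chord S) => //; lia.
Qed.

Lemma bipartite_of_no_chord arc x k (S : qt_geodesic arc x k) a b :
  irreflexive arc -> ~~ arc (x k.+1) (x 0) -> a <= k.+2 -> b <= k.+2 ->
  (odd a == odd b -> ~~ arc (x a) (x b)) /\
  (odd a != odd b -> adjacent arc (x a) (x b)).
Proof.
have [[x_step x_inj x_min] _ _ _] := S => arc_irr no_chord.
wlog ab : a b / (a <= b) => [hwlog a_le b_le | a_le b_le].
  have [ab | ba] := leqP a b; first exact: hwlog.
  have [_ diff_ba] := hwlog b a (ltnW ba) b_le a_le.
  split => [/eqP ab_par | ab_par].
    apply: contra no_chord => ab_arc.
    by apply: (chord_of_arc_back_even S _ _ ab_arc); lia.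
  by rewrite adjacentC diff_ba // eq_sym.
split => [/eqP ab_par | ab_par].
  have [<- | a_ne] := eqVneq a b; first by rewrite arc_irr.
  by apply: (no_forward_chord x_step x_inj x_min); lia.
rewrite /adjacent; have [ba1 | b_ne] := eqVneq b a.+1.
  by rewrite ba1 x_step //; lia.
by apply/orP; right; apply: (arc_back_odd S); lia.
Qed.

End QtGeodesic.

Theorem theorem2p5 (V : finType) (arc : rel V) (k : nat)
  (Hloop : irreflexive arc)
  (Hkodd : odd k) (Hk5 : 5 <= k)
  (Hstrong : strong arc) (Hqt : quasi_transitive arc k)
  (Hdiam : diam_ge arc k.+2)
  (u v : V) (Huv : dist_is arc u v k.+2)
  (P : seq V) (HP : dipath arc u P v k.+2) :
  semicomplete_on arc (u :: P) \/ semicomplete_bipartite_on arc (u :: P).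
Proof.
have S : qt_geodesic arc (nth u (u :: P)) k.
  by split => //; apply: geodesic_nth HP (proj2 Huv).
have size_uP : size (u :: P) = k.+3 by case/and4P: HP => _ _ _ /eqP /= ->.
case/boolP: (arc (nth u (u :: P) k.+1) (nth u (u :: P) 0)) => chord; [left | right].
  apply: (semicomplete_on_nth (x0 := u)) => a b; rewrite size_uP !ltnS.
  exact (adjacent_of_chord S chord).
apply: (semicomplete_bipartite_on_nth (x0 := u) (side := odd)) => a b.
rewrite size_uP !ltnS; exact (bipartite_of_no_chord S Hloop chord).
Qed.
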